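(* The axiom system $APAL_{int}$ satisfies substitution of equivalents: for all $\varphi,\psi,\chi\in\mathcal{L}_{APAL_{int}}$ and $p\in\mathit{Prop}$, if $\varphi\leftrightarrow\psi$ is a theorem of $APAL_{int}$, then $\chi[p/\varphi]\leftrightarrow\chi[p/\psi]$ is a theorem of $APAL_{int}$, where $\chi[p/\varphi]$ denotes the uniform substitution of $\varphi$ for $p$ in $\chi$.
   Context: Fix a countable set $\mathit{Prop}$ and a finite non-empty set $\mathcal{A}$ of agents. $\mathcal{L}_{APAL_{int}}$: $\varphi ::= p \mid \neg\varphi \mid \varphi\wedge\varphi \mid K_i\varphi \mid \mathrm{int}(\varphi)\mid [\varphi]\varphi\mid\Box\varphi$; $\mathcal{L}_{PAL_{int}}$ its $\Box$-free fragment; $\bot:=p\wedge\neg p$, other connectives are abbreviations. Necessity forms: $\xi(\sharp)::=\sharp\mid\varphi\to\xi(\sharp)\mid K_i\xi(\sharp)\mid\mathrm{int}(\xi(\sharp))\mid[\varphi]\xi(\sharp)$; $\xi(\varphi)$ replaces the unique $\sharp$ by $\varphi$. $APAL_{int}$: axioms: propositional tautologies; $K_i(\varphi\to\psi)\to(K_i\varphi\to K_i\psi)$; $K_i\varphi\to\varphi$; $K_i\varphi\to K_iK_i\varphi$; $\neg K_i\varphi\to K_i\neg K_i\varphi$; $\mathrm{int}(\varphi\to\psi)\to(\mathrm{int}(\varphi)\to\mathrm{int}(\psi))$; $\mathrm{int}(\varphi)\to\varphi$; $\mathrm{int}(\varphi)\to\mathrm{int}(\mathrm{int}(\varphi))$;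 $K_i\varphi\to\mathrm{int}(\varphi)$; (R1) $[\varphi]p\leftrightarrow(\mathrm{int}(\varphi)\to p)$; (R2) $[\varphi]\neg\psi\leftrightarrow(\mathrm{int}(\varphi)\to\neg[\varphi]\psi)$; (R3) $[\varphi](\psi\wedge\chi)\leftrightarrow[\varphi]\psi\wedge[\varphi]\chi$; (R4) $[\varphi]\mathrm{int}(\psi)\leftrightarrow(\mathrm{int}(\varphi)\to\mathrm{int}([\varphi]\psi))$; (R5) $[\varphi]K_i\psi\leftrightarrow(\mathrm{int}(\varphi)\to K_i[\varphi]\psi)$; (R6) $[\varphi][\psi]\chi\leftrightarrow[\neg[\varphi]\neg\mathrm{int}(\psi)]\chi$; (R7) $\Box\varphi\to[\chi]\varphi$ for $\chi\in\mathcal{L}_{PAL_{int}}$. Rules: modus ponens; from $\varphi$ infer $K_i\varphi$; from $\varphi$ infer $\mathrm{int}(\varphi)$; from $\varphi$ infer $[\psi]\varphi$; from $\xi([\psi]\chi)$ for all $\psi\in\mathcal{L}_{PAL_{int}}$ infer $\xi(\Box\chi)$. Theorems: smallest set containing the axioms and closed under the rules. *)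

From mathcomp Require Import all_boot.
Set Implicit Arguments. Unset Strict Implicit. Unset Printing Implicit Defensive.

Definition prop_letter := nat.

Section APALint.
Variable Ag : finType. (* the finite set of agents; non-emptiness is a hypothesis of the theorem *)

Inductive form : Type :=
| Var  : prop_letter -> form
| Neg  : form -> form
| And  : form -> form -> form
| Kn   : Ag -> form -> form
| Int  : form -> form
| Ann  : form -> form -> form
| Box  : form -> form.

Fixpoint box_free (f : form) : bool :=
  match f with
  | Var _ => true
  | Neg a => box_free a
  | And a b => box_free a && box_free b
  | Kn _ a => box_free a
  | Int a => box_free a
  | Ann a b => box_free a && box_free b
  | Box _ => false
  end.

Definition Bot : form := And (Var 0) (Neg (Var 0)).
Definition Or (a b : form) : form := Neg (And (Neg a) (Neg b)).
Definition Imp (a b : form) : form := Neg (And a (Neg b)).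
Definition Iff (a b : form) : form := And (Imp a b) (Imp b a).

(* Propositional tautologies: formulas that are true under every Boolean
   valuation of their maximal non-Boolean subformulas (atoms, K_i, int,
   announcements, Box), i.e. substitution instances of classical tautologies. *)
Fixpoint peval (v : form -> bool) (f : form) : bool :=
  match f with
  | Neg a => ~~ peval v a
  | And a b => peval v a && peval v b
  | _ => v f
  end.
Definition taut (f : form) : Prop := forall v : form -> bool, peval v f = true.

Inductive nform : Type :=
| NHole : nform
| NImp  : form -> nform -> nform
| NK    : Ag -> nform -> nform
| NInt  : nform -> nform
| NAnn  : form -> nform -> nform.

Fixpoint fill (x : nform) (f : form) : form :=
  match x with
  | NHole => f
  | NImp a x' => Imp a (fill x' f)
  | NK i x' => Kn i (fill x' f)
  | NInt x' => Int (fill x' f)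
  | NAnn a x' => Ann a (fill x' f)
  end.

Inductive thm : form -> Prop :=
| ax_taut  : forall f, taut f -> thm f
| ax_K     : forall i a b, thm (Imp (Kn i (Imp a b)) (Imp (Kn i a) (Kn i b)))
| ax_T     : forall i a, thm (Imp (Kn i a) a)
| ax_4     : forall i a, thm (Imp (Kn i a) (Kn i (Kn i a)))
| ax_5     : forall i a, thm (Imp (Neg (Kn i a)) (Kn i (Neg (Kn i a))))
| ax_intK  : forall a b, thm (Imp (Int (Imp a b)) (Imp (Int a) (Int b)))
| ax_intT  : forall a, thm (Imp (Int a) a)
| ax_int4  : forall a, thm (Imp (Int a) (Int (Int a)))
| ax_Kint  : forall i a, thm (Imp (Kn i a) (Int a))
| ax_R1    : forall a p, thm (Iff (Ann a (Var p)) (Imp (Int a) (Var p)))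
| ax_R2    : forall a b, thm (Iff (Ann a (Neg b)) (Imp (Int a) (Neg (Ann a b))))
| ax_R3    : forall a b c, thm (Iff (Ann a (And b c)) (And (Ann a b) (Ann a c)))
| ax_R4    : forall a b, thm (Iff (Ann a (Int b)) (Imp (Int a) (Int (Ann a b))))
| ax_R5    : forall i a b, thm (Iff (Ann a (Kn i b)) (Imp (Int a) (Kn i (Ann a b))))
| ax_R6    : forall a b c,
    thm (Iff (Ann a (Ann b c)) (Ann (Neg (Ann a (Neg (Int b)))) c))
| ax_R7    : forall a c, box_free c -> thm (Imp (Box a) (Ann c a))
| r_MP     : forall a b, thm (Imp a b) -> thm a -> thm b
| r_NecK   : forall i a, thm a -> thm (Kn i a)
| r_NecInt : forall a, thm a -> thm (Int a)
| r_NecAnn : forall a b, thm a -> thm (Ann b a)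
| r_Box    : forall (x : nform) c,
    (forall b, box_free b -> thm (fill x (Ann b c))) -> thm (fill x (Box c)).

Fixpoint subst (p : prop_letter) (g : form) (f : form) : form :=
  match f with
  | Var q => if q == p then g else Var q
  | Neg a => Neg (subst p g a)
  | And a b => And (subst p g a) (subst p g b)
  | Kn i a => Kn i (subst p g a)
  | Int a => Int (subst p g a)
  | Ann a b => Ann (subst p g a) (subst p g b)
  | Box a => Box (subst p g a)
  end.

End APALint.

(* Induction on chi; the two non-trivial cases are congruence of the
   announcement [a]d in each argument, and of Box.

   In the second argument, [c] is normal: it distributes over implication by
   R2 and R3 once we know that not int(c) implies [c]b, which follows by
   induction on b (R6 flattens nested announcements, and [c] Box d is reduced
   by the Box rule for the necessity form not int(c) -> [c]#).

   In the first argument, [a]d <-> [b]d for equivalent a, b follows by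
   induction on d from R1-R6, which mention a only inside int(a) and inside
   [a]e for e smaller than d.  For d = Box d', the Box rule for the necessity
   form [a] Box d' -> [b]# leaves [a] Box d' -> [b][e]d' for Box-free e; by R7
   and R6 both sides become announcements of d' with equivalent
   preconditions, by the induction hypothesis for e. *)
From mathcomp Require Import all_boot.
Set Implicit Arguments. Unset Strict Implicit.

(* R6 reads [a][e]d <-> [ann_comp a e]d. *)
Definition ann_comp (Ag : finType) (a e : form Ag) : form Ag :=
  Neg (Ann a (Neg (Int e))).

Ltac prop_taut :=
  let v := fresh "v" in
  intro v; rewrite /Iff /Imp /ann_comp /=;
  repeat match goal with
         | |- context[peval v ?x] => destruct (peval v x)
         | |- context[v ?x] => destruct (v x)
         end; reflexivity.

Section Congruence.
Variable Ag : finType.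
Notation F := (form Ag).

Lemma taut_mp (a b : F) : taut (Imp a b) -> thm a -> thm b.
Proof. by move=> T; apply: r_MP (ax_taut T). Qed.

Lemma thm_and (a b : F) : thm a -> thm b -> thm (And a b).
Proof.
move=> ha hb; apply: r_MP hb; apply: taut_mp ha; prop_taut.
Qed.

Lemma thm_iff_refl (a : F) : thm (Iff a a).
Proof. apply: ax_taut; prop_taut. Qed.

Lemma thm_iff_sym (a b : F) : thm (Iff a b) -> thm (Iff b a).
Proof. apply: taut_mp; prop_taut. Qed.

Lemma congr_of_iff_imp (f : F -> F) :
  (forall a b, thm (Iff a b) -> thm (Imp (f a) (f b))) ->
  forall a b, thm (Iff a b) -> thm (Iff (f a) (f b)).
Proof.
move=> fP a b h; apply: taut_mp (thm_and (fP a b h) (fP b a (thm_iff_sym h))).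
prop_taut.
Qed.

Lemma congr_of_mono (f : F -> F) :
  (forall a b, thm (Imp a b) -> thm (Imp (f a) (f b))) ->
  forall a b, thm (Iff a b) -> thm (Iff (f a) (f b)).
Proof.
move=> fP; apply: congr_of_iff_imp => a b h; apply: fP.
by apply: taut_mp h; prop_taut.
Qed.

Lemma int_congr (a b : F) : thm (Iff a b) -> thm (Iff (Int a) (Int b)).
Proof.
move: a b; apply: (congr_of_mono (f := @Int Ag)) => a b h.
exact: r_MP (ax_intK a b) (r_NecInt h).
Qed.

Lemma kn_congr (i : Ag) (a b : F) :
  thm (Iff a b) -> thm (Iff (Kn i a) (Kn i b)).
Proof.
move: a b; apply: (congr_of_mono (f := @Kn Ag i)) => a b h.
exact: r_MP (ax_K i a b) (r_NecK i h).
Qed.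

Lemma not_int_ann_comp (c e : F) :
  thm (Imp (Neg (Int c)) (Neg (Int (ann_comp c e)))).
Proof.
apply: taut_mp (thm_and (ax_intT (ann_comp c e)) (ax_R2 c (Int e))); prop_taut.
Qed.

Lemma ann_ann_of_not_int (c b1 b2 : F) :
  (forall c', thm (Imp (Neg (Int c')) (Ann c' b2))) ->
  thm (Imp (Neg (Int c)) (Ann c (Ann b1 b2))).
Proof.
move=> IH; apply: taut_mp (thm_and (ax_R6 c b1 b2)
  (thm_and (IH (ann_comp c b1)) (not_int_ann_comp c b1))).
prop_taut.
Qed.

Lemma ann_of_not_int (c b : F) : thm (Imp (Neg (Int c)) (Ann c b)).
Proof.
elim: b c => [q|b _|b1 IH1 b2 IH2|i b _|b _|b1 _ b2 IH2|d IH] c.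
- apply: taut_mp (ax_R1 c q); prop_taut.
- apply: taut_mp (ax_R2 c b); prop_taut.
- apply: taut_mp (thm_and (ax_R3 c b1 b2) (thm_and (IH1 c) (IH2 c))); prop_taut.
- apply: taut_mp (ax_R5 i c b); prop_taut.
- apply: taut_mp (ax_R4 c b); prop_taut.
- exact: ann_ann_of_not_int.
- apply (@r_Box Ag (NImp (Neg (Int c)) (NAnn c (NHole Ag))) d); move=> e _ /=.
  exact: ann_ann_of_not_int.
Qed.

Lemma ann_mono (c a b : F) : thm (Imp a b) -> thm (Imp (Ann c a) (Ann c b)).
Proof.
move=> h; have hc : thm (Ann c (Imp a b)) := r_NecAnn c h.
apply: taut_mp (thm_and hc (thm_and (ax_R2 c (And a (Neg b)))
  (thm_and (ax_R3 c a (Neg b)) (thm_and (ax_R2 c b) (ann_of_not_int c b))))).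
prop_taut.
Qed.

Lemma ann_congr (c a b : F) : thm (Iff a b) -> thm (Iff (Ann c a) (Ann c b)).
Proof. by move: a b; apply: (congr_of_mono (f := Ann c)); apply: ann_mono. Qed.

Lemma box_congr (a b : F) : thm (Iff a b) -> thm (Iff (Box a) (Box b)).
Proof.
move: a b; apply: (congr_of_mono (f := @Box Ag)) => a b h.
apply (@r_Box Ag (NImp (Box a) (NHole Ag)) b); move=> e e_bf /=.
apply: taut_mp (thm_and (ax_R7 a e_bf) (ann_mono e h)); prop_taut.
Qed.

Lemma ann_comp_congl (a b e : F) :
  thm (Iff a b) -> thm (Iff (Ann a e) (Ann b e)) ->
  thm (Iff (ann_comp a e) (ann_comp b e)).
Proof.
move=> hab he.
apply: taut_mp (thm_and (ax_R2 a (Int e)) (thm_and (ax_R2 b (Int e))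
  (thm_and (ax_R4 a e) (thm_and (ax_R4 b e)
  (thm_and (int_congr he) (int_congr hab)))))).
prop_taut.
Qed.

Lemma form_ind_box_free (Q : F -> Prop) :
  (forall q, Q (Var Ag q)) ->
  (forall d, Q d -> Q (Neg d)) ->
  (forall d1 d2, Q d1 -> Q d2 -> Q (And d1 d2)) ->
  (forall i d, Q d -> Q (Kn i d)) ->
  (forall d, Q d -> Q (Int d)) ->
  (forall d1 d2, Q d1 -> Q d2 -> Q (Ann d1 d2)) ->
  (forall d, Q d -> (forall e, box_free e -> Q e) -> Q (Box d)) ->
  forall d, Q d.
Proof.
move=> QVar QNeg QAnd QKn QInt QAnn QBox.
have Qbf d : box_free d -> Q d.
  elim: d => [q|d IH|d1 IH1 d2 IH2|i d IH|d IH|d1 IH1 d2 IH2|//] /=;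
    try case/andP; auto.
elim; auto.
Qed.

Lemma ann_congl (a b d : F) : thm (Iff a b) -> thm (Iff (Ann a d) (Ann b d)).
Proof.
elim/form_ind_box_free: d a b
  => [q|d IH|d1 d2 IH1 IH2|i d IH|d IH|d1 d2 IH1 IH2|d IH IHbf] a b h.
- apply: taut_mp (thm_and (ax_R1 a q) (thm_and (ax_R1 b q) (int_congr h))).
  prop_taut.
- apply: taut_mp (thm_and (ax_R2 a d)
    (thm_and (ax_R2 b d) (thm_and (int_congr h) (IH a b h)))).
  prop_taut.
- apply: taut_mp (thm_and (ax_R3 a d1 d2)
    (thm_and (ax_R3 b d1 d2) (thm_and (IH1 a b h) (IH2 a b h)))).
  prop_taut.
- apply: taut_mp (thm_and (ax_R5 i a d)
    (thm_and (ax_R5 i b d) (thm_and (int_congr h) (kn_congr i (IH a b h))))).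
  prop_taut.
- apply: taut_mp (thm_and (ax_R4 a d)
    (thm_and (ax_R4 b d) (thm_and (int_congr h) (int_congr (IH a b h))))).
  prop_taut.
- have hpre := IH2 _ _ (ann_comp_congl h (IH1 a b h)).
  apply: taut_mp (thm_and (ax_R6 a d1 d2) (thm_and (ax_R6 b d1 d2) hpre)).
  prop_taut.
- move: a b h; apply: (congr_of_iff_imp (f := fun a => Ann a (Box d))) => a b h.
  apply (@r_Box Ag (NImp (Ann a (Box d)) (NAnn b (NHole Ag))) d).
  move=> e e_bf /=.
  have hpre := IH _ _ (ann_comp_congl h (IHbf e e_bf a b h)).
  apply: taut_mp (thm_and (ann_mono a (ax_R7 d e_bf))
    (thm_and (ax_R6 a e d) (thm_and (ax_R6 b e d) hpre))).
  prop_taut.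
Qed.

End Congruence.

Theorem mainTheorem12 (Ag : finType) (HAg : 0 < #|Ag|)
  (phi psi chi : form Ag) (p : prop_letter) :
  thm (Iff phi psi) -> thm (Iff (subst p phi chi) (subst p psi chi)).
Proof.
move=> h; elim: chi => [q|d IH|d1 IH1 d2 IH2|i d IH|d IH|d1 IH1 d2 IH2|d IH] /=.
- by case: eqP => _; [exact: h | exact: thm_iff_refl].
- apply: taut_mp IH; prop_taut.
- apply: taut_mp (thm_and IH1 IH2); prop_taut.
- exact: kn_congr.
- exact: int_congr.
- have hl := ann_congl (subst p phi d2) IH1.
  have hr := ann_congr (subst p psi d1) IH2.
  apply: taut_mp (thm_and hl hr); prop_taut.
- exact: box_congr.
Qed.
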